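(* Let $L$ be a finite lattice, let $b\in L$, and let $A\subseteq L$ be a $b$-meet antichain. Let $L_A^b=\{\bigwedge A'\wedge b : A'\subseteq A\}$, regarded as a subposet of $L$ (it is a lattice), and let $\mu_A^b$ be the Möbius function of the lattice $L_A^b$. Then for every $\varphi\in R(L)$, $$\nabla_A^b\varphi=\sum_{x\in L_A^b}\varphi(x)\,\mu_A^b(x,b).$$
   Context: $L$ is a finite lattice with order $\le$, meet $\wedge$, minimum $\hat0$ and maximum $\hat1$; $R(L)$ is the space of real-valued functions on $L$. For $A'\subseteq L$, $\bigwedge A'$ is the meet of the elements of $A'$, with $\bigwedge\emptyset=\hat1$. For a finite subset $A\subseteq L$ and $b\in L$, the successive difference functional is $\nabla_A^b\varphi=\sum_{A'\subseteq A}(-1)^{|A'|}\varphi(\bigwedge A'\wedge b)$; for nonempty $A=\{a_1,\dots,a_n\}$ this equals $\nabla_{a_1,\ldots,a_n}\varphi(b)$, where $\nabla_a\varphi(x)=\varphi(x)-\varphi(x\wedge a)$ and $\nabla_{a_1,\ldots,a_n}\varphi=\nabla_{a_n}(\nabla_{a_1,\ldots,a_{n-1}}\varphi)$. An $n$-element subset $A=\{a_1,\dots,a_n\}$ of $L$ is a $b$-meet antichain if $\{a_1\wedge b,\dots,a_n\wedge b\}$ is an $n$-element antichain (pairwise incomparable distinct elements); a singleton $\{a\}$ counts as a $b$-meet antichain only when $b\not\le a$. The Möbius function $\mu$ of a finite poset $P$ is defined by $\mu(x,x)=1$ and $\mu(x,y)=-\sum_{x\le z<y}\mu(x,z)$ for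 $x<y$. *)

From HB Require Import structures.
From mathcomp Require Import all_boot all_order all_algebra.
From mathcomp Require Export reals.
Set Implicit Arguments. Unset Strict Implicit. Unset Printing Implicit Defensive.
Import Order.TTheory GRing.Theory Num.Theory.
Local Open Scope ring_scope.

Section Defs.
Variables (d : Order.disp_t) (L : finTBLatticeType d) (R : realType).

Definition bigmeet (A' : {set L}) : L := \big[Order.meet/Order.top]_(a in A') a.

Definition nablaAb (A : {set L}) (b : L) (phi : L -> R) : R :=
  \sum_(A' in powerset A) (-1) ^+ #|A'| * phi (Order.meet (bigmeet A') b).

Definition meet_antichain (b : L) (A : {set L}) : Prop :=
  if #|A| == 1%N then forall a, a \in A -> ~~ (b <= a)%O
  else forall x y, x \in A -> y \in A -> x != y ->
         ~~ (Order.comparable (Order.meet x b) (Order.meet y b)).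

Definition LAb (A : {set L}) (b : L) : {set L} :=
  [set Order.meet (bigmeet A') b | A' in powerset A].

Fixpoint mobius_fuel (S : {set L}) (n : nat) (x y : L) : R :=
  if x == y then 1 else
  match n with
  | 0%N => 0
  | n'.+1 => if (x < y)%O then
               - \sum_(z in S | (x <= z)%O && (z < y)%O) mobius_fuel S n' x z
             else 0
  end.

Definition mobius (S : {set L}) (x y : L) : R := mobius_fuel S #|S| x y.

End Defs.

From mathcomp Require Import all_boot all_order all_algebra reals.
Set Implicit Arguments. Unset Strict Implicit. Unset Printing Implicit Defensive.
Local Open Scope ring_scope.
Import Order.TTheory GRing.Theory.

(* Group the terms of [nablaAb A b phi] by the value [x] of the meet: the
   coefficient [c x] of [phi x] is a signed count of subsets of [A].  For [y]
   in [L_A^b], the subsets whose meet lies above [y] are exactly the subsets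
   of [{a in A | y <= a}], so summing [c] over the upper set of [y] gives an
   alternating sum over a powerset; it vanishes unless that set is empty,
   which (as no element of [A] lies above [b]) happens only for [y = b].
   Moebius inversion on [L_A^b] then identifies [c x] with [mu(x, b)]. *)

Lemma sum_powerset_sign (R : pzRingType) (T : finType) (C : {set T}) :
  \sum_(B in powerset C) (-1) ^+ #|B| = (C == set0)%:R :> R.
Proof.
case: (set_0Vmem C) => [->|[c cC]].
  by rewrite powerset0 big_set1 cards0 expr0 eqxx.
have /negbTE -> : C != set0 by apply/set0Pn; exists c.
pose toggle (B : {set T}) := if c \in B then B :\ c else c |: B.
have toggleK : involutive toggle.
  move=> B; rewrite /toggle; case: (boolP (c \in B)) => cB.
    by rewrite !inE eqxx /= setD1K.
  by rewrite setU11 setU1K.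
have in_toggle B : (c \in toggle B) = (c \notin B).
  by rewrite /toggle; case: (c \in B); rewrite !inE eqxx.
have toggle_sub B : (toggle B \subset C) = (B \subset C).
  rewrite /toggle; case: (boolP (c \in B)) => cB.
    by rewrite subDset (setUidPr _) // sub1set.
  by rewrite subUset sub1set cC.
have toggle_sign B : (-1) ^+ #|toggle B| = - (-1) ^+ #|B| :> R.
  rewrite /toggle; case: (boolP (c \in B)) => cB.
    by rewrite [in RHS](cardsD1 c B) cB exprS mulN1r opprK.
  by rewrite cardsU1 cB exprS mulN1r.
rewrite (bigID (fun B : {set T} => c \in B)) /= (reindex_inj (inv_inj toggleK)) /=.
rewrite (eq_big (fun B => (B \in powerset C) && (c \notin B))
                (fun B => - (-1) ^+ #|B|)); last 2 first.
- by move=> B; rewrite !powersetE toggle_sub in_toggle.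
- by move=> B _; rewrite toggle_sign.
by rewrite sumrN addNr.
Qed.

Section Mobius.
Variables (d : Order.disp_t) (L : finTBLatticeType d) (R : realType).
Variable S : {set L}.

Definition itv_card (x y : L) := #|[set z in S | (x <= z)%O && (z < y)%O]|.

Lemma itv_card_lt {x y z} : z \in S -> (x <= z)%O -> (z < y)%O ->
  (itv_card x z < itv_card x y)%N.
Proof.
move=> zS xz zy; apply: proper_card; apply/properP; split.
  apply/subsetP => w; rewrite !inE => /andP[-> /andP[-> wz]] /=.
  exact: lt_trans wz zy.
by exists z; rewrite !inE ?zS ?xz ?zy ?ltxx ?andbF.
Qed.

Lemma itv_card_le x y : (itv_card x y <= #|S|)%N.
Proof. by apply: subset_leq_card; apply/subsetP => z; rewrite inE => /andP[]. Qed.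

Lemma mobius_fuel_stable x n m y :
  (itv_card x y <= n)%N -> (itv_card x y <= m)%N ->
  mobius_fuel R S n x y = mobius_fuel R S m x y.
Proof.
have fuel0 k y' : itv_card x y' = 0%N ->
    mobius_fuel R S k x y' = mobius_fuel R S 0 x y'.
  case: k => [|k] //= h; case: (x == y') => //; case: ifP => // _.
  rewrite big_pred0 ?oppr0 // => z; apply/negbTE/negP => /andP[zS /andP[xz zy]].
  by have := itv_card_lt zS xz zy; rewrite h.
have fuel0_le k k' y' : (itv_card x y' <= 0)%N ->
    mobius_fuel R S k x y' = mobius_fuel R S k' x y'.
  by rewrite leqn0 => /eqP h; rewrite !fuel0.
elim: n m y => [|n IH] [|m] y hn hm; try exact: fuel0_le.
rewrite /=; case: (x == y) => //; case: ifP => // _; congr (- _).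
apply: eq_bigr => z /andP[zS /andP[xz zy]].
have lt := itv_card_lt zS xz zy.
by apply: IH; rewrite -ltnS; apply: leq_trans lt _.
Qed.

Lemma mobius_refl x : mobius R S x x = 1.
Proof. by rewrite /mobius; case: #|S| => [|k] /=; rewrite eqxx. Qed.

Lemma mobius_lt x y : x \in S -> (x < y)%O ->
  mobius R S x y = - \sum_(z in S | (x <= z)%O && (z < y)%O) mobius R S x z.
Proof.
rewrite /mobius => xS xy; have := itv_card_le x y.
have : (0 < #|S|)%N by apply/card_gt0P; exists x.
case: #|S| => [//|n] _ hy; rewrite [LHS]/=.
rewrite (lt_eqF xy) xy; congr (- _); apply: eq_bigr => z /andP[zS /andP[xz zy]].
have hz : (itv_card x z <= n)%N.
  by rewrite -ltnS; apply: leq_trans (itv_card_lt zS xz zy) hy.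
by apply: mobius_fuel_stable => //; apply: leqW.
Qed.

Lemma sum_mobius_itv x w : x \in S -> w \in S ->
  \sum_(z in S | (x <= z)%O && (z <= w)%O) mobius R S x z = (x == w)%:R.
Proof.
move=> xS wS; case: (eqVneq x w) => [<-|xw].
  rewrite (big_pred1 x) ?mobius_refl // => z /=; rewrite -eq_le eq_sym.
  by case: (eqVneq z x) => [->|] /=; rewrite ?xS ?andbF.
have [xlw|xNlw] := boolP (x <= w)%O; last first.
  rewrite big_pred0 // => z; apply/negbTE/negP => /andP[_ /andP[xz zw]].
  by move: xNlw; rewrite (le_trans xz zw).
rewrite (bigD1 w) /=; last by rewrite wS xlw lexx.
rewrite mobius_lt ?lt_neqAle ?xw //.
rewrite addrC; apply/eqP; rewrite subr_eq0; apply/eqP; apply: eq_bigl => z.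
by rewrite lt_neqAle -!andbA; congr (_ && (_ && _)); rewrite andbC.
Qed.

Lemma mobius_inversion (f g : L -> R) :
  (forall y, y \in S -> g y = \sum_(w in S | (y <= w)%O) f w) ->
  forall x, x \in S -> f x = \sum_(z in S | (x <= z)%O) mobius R S x z * g z.
Proof.
move=> gE x xS.
rewrite (eq_bigr (fun z => \sum_(w in S | (z <= w)%O) mobius R S x z * f w));
  last by move=> z /andP[zS _]; rewrite gE // mulr_sumr.
rewrite (exchange_big_dep (fun w => (w \in S) && (x <= w)%O)) /=; last first.
  by move=> z w /andP[_ xz] /andP[-> zw]; rewrite (le_trans xz zw).
rewrite (eq_bigr (fun w => (x == w)%:R * f w)); last first.
  move=> w /andP[wS _]; rewrite -mulr_suml -sum_mobius_itv //.
  by congr (_ * _); apply: eq_bigl => z; rewrite wS /= -andbA.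
rewrite (bigD1 x) /=; last by rewrite xS lexx.
rewrite eqxx mul1r big1 ?addr0 // => w /andP[_ /negbTE].
by rewrite eq_sym => ->; rewrite mul0r.
Qed.

End Mobius.

Section Nabla.
Variables (d : Order.disp_t) (L : finTBLatticeType d) (R : realType).
Variables (A : {set L}) (b : L).

Definition meetb (A' : {set L}) := Order.meet (bigmeet A') b.

Definition nabla_coef (x : L) : R :=
  \sum_(A' in powerset A | meetb A' == x) (-1) ^+ #|A'|.

Lemma LAb_le z : z \in LAb A b -> (z <= b)%O.
Proof. by move=> /imsetP[A' _ ->]; apply: leIr. Qed.

Lemma b_in_LAb : b \in LAb A b.
Proof.
apply/imsetP; exists set0; first by rewrite powersetE sub0set.
by rewrite /bigmeet big_set0 meet1x.
Qed.

Lemma nablaAb_coef phi :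
  nablaAb A b phi = \sum_(x in LAb A b) phi x * nabla_coef x.
Proof.
rewrite /nablaAb (partition_big meetb (mem (LAb A b))) /=; last first.
  by move=> A' A'A; apply: imset_f.
apply: eq_bigr => x _; rewrite mulr_sumr.
by apply: eq_bigr => A' /andP[_ /eqP <-]; rewrite mulrC.
Qed.

Lemma le_meetb (y : L) (A' : {set L}) : (y <= b)%O ->
  (A' \subset A) && (y <= meetb A')%O = (A' \subset [set a in A | (y <= a)%O]).
Proof.
move=> yb; rewrite /meetb lexI yb andbT.
apply/idP/idP => [/andP[/subsetP sA /meetsP ymeet]|/subsetP sA].
  by apply/subsetP => a aA'; rewrite inE sA //= ymeet.
apply/andP; split; first by apply/subsetP => a /sA; rewrite inE => /andP[].
by apply/meetsP => a /sA; rewrite inE => /andP[].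
Qed.

Hypothesis b_nle : forall a, a \in A -> ~~ (b <= a)%O.

Lemma LAb_upper_eq0 y : y \in LAb A b ->
  ([set a in A | (y <= a)%O] == set0) = (y == b).
Proof.
move=> yS; apply/idP/idP => [/eqP upper0|/eqP ->]; last first.
  by apply/eqP/setP => a; rewrite !inE; case: (boolP (a \in A)) => // /b_nle /negbTE.
case/imsetP: yS upper0 => A' A'A -> upper0.
case: (set_0Vmem A') => [->|[a aA']]; first by rewrite /bigmeet big_set0 meet1x.
have : a \in [set a in A | (Order.meet (bigmeet A') b <= a)%O].
  rewrite inE; move: A'A; rewrite powersetE => /subsetP -> //=.
  by apply: leIxl; apply: meets_inf.
by rewrite upper0 inE.
Qed.

Lemma sum_nabla_coef_ge y : y \in LAb A b ->
  \sum_(w in LAb A b | (y <= w)%O) nabla_coef w = (y == b)%:R.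
Proof.
move=> yS; rewrite -LAb_upper_eq0 // -sum_powerset_sign.
pose P A' := (A' \in powerset A) && (y <= meetb A')%O.
rewrite (eq_bigr (fun w => \sum_(A' | P A' && (meetb A' == w)) (-1) ^+ #|A'|));
  last first.
  move=> w /andP[_ yw]; apply: eq_bigl => A'; rewrite /P.
  by case: eqP => [->|_]; rewrite ?andbF // yw !andbT.
rewrite -(partition_big meetb (fun w => (w \in LAb A b) && (y <= w)%O)) /=; last first.
  by move=> A' /andP[A'A ->]; rewrite andbT; apply: imset_f.
by apply: eq_bigl => A'; rewrite /P powersetE le_meetb ?LAb_le // powersetE.
Qed.

End Nabla.

Lemma meet_antichain_nle d (L : finTBLatticeType d) (b : L) (A : {set L}) a :
  meet_antichain b A -> a \in A -> ~~ (b <= a)%O.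
Proof.
rewrite /meet_antichain; case: ifP => [_ nle aA|cardA incomp aA]; first exact: nle.
apply/negP => ba.
have /set0Pn[a' /setD1P[a'a a'A]] : A :\ a != set0.
  rewrite -cards_eq0; apply: contraFneq cardA => cardA0.
  by rewrite (cardsD1 a A) aA cardA0.
have := incomp a a' aA a'A; rewrite eq_sym a'a => /(_ isT).
by rewrite (meet_idPr ba) ge_comparable // leIr.
Qed.

Theorem lemma2p2 (d : Order.disp_t) (L : finTBLatticeType d) (R : realType)
  (b : L) (A : {set L}) :
  meet_antichain b A ->
  forall phi : L -> R,
    nablaAb A b phi = \sum_(x in LAb A b) phi x * mobius R (LAb A b) x b.
Proof.
move=> anti phi; rewrite nablaAb_coef; apply: eq_bigr => x xS; congr (_ * _).
have b_nle a : a \in A -> ~~ (b <= a)%O by exact: meet_antichain_nle.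
rewrite (mobius_inversion (g := fun z => (z == b)%:R) _ xS); last first.
  by move=> y yS; rewrite (sum_nabla_coef_ge R b_nle yS).
rewrite (bigD1 b) /=; last by rewrite b_in_LAb (LAb_le xS).
by rewrite eqxx mulr1 big1 ?addr0 // => z /andP[_ /negbTE ->]; rewrite mulr0.
Qed.
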